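(* If $T$ is a tree of order $n\ge 2$, then $\gamma_{\rm gr}^t(T) = n$ if and only if $T$ has a perfect matching.
   Context: $N(v)$ denotes the open neighborhood of $v$. A sequence $S=(v_1,\ldots,v_k)$ of distinct vertices of a graph $G$ without isolated vertices is a legal sequence if $N(v_i)\setminus \bigcup_{j=1}^{i-1} N(v_j)\neq\emptyset$ for every $i\in\{2,\ldots,k\}$, and a total dominating sequence if moreover $\{v_1,\ldots,v_k\}$ is a total dominating set of $G$ (every vertex has a neighbor in it). $\gamma_{\rm gr}^t(G)$ is the maximum length of a total dominating sequence of $G$. *)

(* A simple graph is a symmetric irreflexive relation e on a finType T. *)
From mathcomp Require Import all_boot.
Set Implicit Arguments. Unset Strict Implicit. Unset Printing Implicit Defensive.

Section Graphs.
Variables (T : finType) (e : rel T).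

Definition nbhd (v : T) : {set T} := [set u | e v u].

Definition connected_graph : Prop := forall x y : T, connect e x y.

Definition acyclic_graph : Prop :=
  forall c : seq T, uniq c -> 2 < size c -> ~~ cycle e c.

Definition is_tree : Prop := connected_graph /\ acyclic_graph.

Definition nbhd_union (p : seq T) : {set T} := \bigcup_(w <- p) nbhd w.

Definition legal_seq (s : seq T) : bool :=
  uniq s &&
  [forall i : 'I_(size s),
     (0 < i) ==> (nbhd (tnth (in_tuple s) i) :\: nbhd_union (take i s) != set0)].

Definition total_dominating (s : seq T) : bool :=
  [forall x : T, [exists v in s, e v x]].

Definition total_dominating_seq (s : seq T) : bool :=
  legal_seq s && total_dominating s.

(* gamma_gr^t : the maximum length of a total dominating sequence
   (lengths are bounded by #|T| since entries are distinct) *)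
Definition gamma_gr_t : nat :=
  \max_(k < #|T|.+1 | [exists t : k.-tuple T, total_dominating_seq t]) k.

Definition has_perfect_matching : Prop :=
  exists M : {set {set T}},
    (forall m, m \in M -> exists u v, e u v /\ m = [set u; v]) /\
    (forall x : T, #|[set m in M | x \in m]| = 1).

End Graphs.

From mathcomp Require Import all_boot.
Set Implicit Arguments. Unset Strict Implicit. Unset Printing Implicit Defensive.

(* A total dominating sequence of length n lists every vertex, and each vertex
   x has a footprint f x: a neighbor that no earlier vertex dominates.  Distinct
   vertices have distinct footprints, so f is a permutation moving every vertex
   along an edge; in a tree its cycles have length 2, so f pairs the vertices
   along edges: a perfect matching.
   Conversely, given a perfect matching x |-> x', list the vertices so that v
   comes before w whenever w <> v is adjacent to v'.  Such an order exists
   because a cycle v, w, ... of these constraints would give the closed walk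
   v, v', w, w', ... in the tree, which never backtracks.  In that order every
   vertex v newly dominates v'. *)

Section Graph.
Variables (T : finType) (e : rel T).

Lemma in_nbhd_union p u : (u \in nbhd_union e p) = has (e^~ u) p.
Proof.
rewrite /nbhd_union; elim: p => [|w p IH]; first by rewrite big_nil inE.
by rewrite big_cons in_setU IH /nbhd inE.
Qed.

Lemma gamma_gr_t_cardP : 0 < #|T| ->
  gamma_gr_t e = #|T| <-> exists s, size s = #|T| /\ total_dominating_seq e s.
Proof.
move=> T_gt0; split=> [gamma_n | [s [size_s tds_s]]]; last first.
  apply/eqP; rewrite eqn_leq; apply/andP; split.
    by apply/bigmax_leqP => i _; rewrite -ltnS.
  have size_s' : size s == #|T| by rewrite size_s.
  apply: (@leq_bigmax_cond _ _ (fun i : 'I_#|T|.+1 => nat_of_ord i) ord_max).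
  by apply/existsP; exists (Tuple size_s').
case: (boolP [exists t : #|T|.-tuple T, total_dominating_seq e t]).
  by case/existsP => t tds_t; exists t; rewrite size_tuple.
move=> no_full; suff : gamma_gr_t e <= #|T|.-1.
  by rewrite gamma_n leqNgt ltn_predL T_gt0.
apply/bigmax_leqP => i /existsP [t tds_t].
have i_ne : i != #|T| :> nat.
  apply: contraNneq no_full => i_n; apply/existsP.
  have size_t : size t == #|T| by rewrite size_tuple i_n.
  by exists (Tuple size_t).
by rewrite -ltnS prednK // ltn_neqAle i_ne -ltnS ltn_ord.
Qed.

Lemma connected_no_isolated :
  connected_graph e -> 1 < #|T| -> forall x, exists y, e x y.
Proof.
move=> conn T_gt1 x; have : 0 < #|predC1 x| by rewrite cardC1 -ltnS prednK // ltnW.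
case/card_gt0P => y; rewrite !inE => y_ne_x.
case/connectP: (conn x y) => [[|z p]] /=; first by move=> _ y_x; rewrite y_x eqxx in y_ne_x.
by case/andP=> e_xz _ _; exists z.
Qed.

Lemma legal_enum_footprint (s : seq T) :
  (forall x, exists y, e x y) -> legal_seq e s -> size s = #|T| ->
  exists f : T -> T, (forall x, e x (f x)) /\ injective f.
Proof.
move=> no_isolated /andP [uniq_s /forallP legal] size_s.
have mem_s x : x \in s.
  have card_s : #|s| = #|T| by rewrite (card_uniqP uniq_s).
  have s_T : s =i T by apply/(subset_cardP card_s)/subsetP.
  by rewrite s_T.
have [f f_new] : exists f : T -> T, forall x,
    e x (f x) /\ forall w, index w s < index x s -> ~~ e w (f x).
  apply: (@fin_all_exists T (fun=> T)
    (fun x y => e x y /\ forall w, index w s < index x s -> ~~ e w y)) => x.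
  have [-> | index_gt0] := posnP (index x s).
    by have [y e_xy] := no_isolated x; exists y.
  have index_lt : index x s < size s by rewrite index_mem.
  move: (legal (Ordinal index_lt)); rewrite /= index_gt0 (tnth_nth x) /= nth_index //.
  case/set0Pn => y; rewrite !inE in_nbhd_union => /andP [/hasPn new_y e_xy].
  by exists y; split=> // w index_w; apply: new_y; rewrite in_take.
exists f; split=> [x | x y f_xy]; first by case: (f_new x).
have [lt|lt|eq] := ltngtP (index x s) (index y s).
- by case: (f_new y) => _ /(_ x lt); rewrite -f_xy; case: (f_new x) => ->.
- by case: (f_new x) => _ /(_ y lt); rewrite f_xy; case: (f_new y) => ->.
- by rewrite -(nth_index x (mem_s x)) eq nth_index.
Qed.

End Graph.

Section PerfectMatching.
Variables (T : finType) (e : rel T).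
Hypotheses (sym : symmetric e) (irr : irreflexive e).

Lemma perfect_matchingP :
  has_perfect_matching e <-> exists f, (forall x, e x (f x)) /\ involutive f.
Proof.
split=> [[M [M_edge M_cover]] | [f [e_f fK]]]; last first.
  exists [set [set x; f x] | x : T]; split.
    by move=> m /imsetP [x _ ->]; exists x, (f x).
  move=> x; apply/eqP/cards1P; exists [set x; f x]; apply/setP => m.
  rewrite !inE; apply/andP/eqP => [[/imsetP [y _ ->]] | ->].
    by rewrite !inE => /orP[] /eqP ->; rewrite ?fK 1?setUC.
  by split; [apply/imsetP; exists x | rewrite !inE eqxx].
have block_unique z m1 m2 : m1 \in M -> m2 \in M -> z \in m1 -> z \in m2 -> m1 = m2.
  move=> M_m1 M_m2 z_m1 z_m2; have /eqP/cards1P [m0 M_z] := M_cover z.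
  have : m1 \in [set m in M | z \in m] by rewrite inE M_m1.
  have : m2 \in [set m in M | z \in m] by rewrite inE M_m2.
  by rewrite M_z !inE => /eqP -> /eqP ->.
have [f f_M] : exists f, forall x, [set x; f x] \in M /\ e x (f x).
  apply: (@fin_all_exists T (fun=> T) (fun x y => [set x; y] \in M /\ e x y)) => x.
  have /eqP/cards1P [m M_x] := M_cover x.
  have : m \in [set m in M | x \in m] by rewrite M_x inE.
  rewrite inE => /andP [M_m]; have [u [v [e_uv m_uv]]] := M_edge m M_m.
  rewrite m_uv !inE => /orP[] /eqP ->.
    by exists v; rewrite -m_uv.
  by exists u; rewrite setUC -m_uv sym.
exists f; split=> [x | x]; first by case: (f_M x).
have [M_x _] := f_M x; have [M_fx e_ffx] := f_M (f x).
have := block_unique (f x) _ _ M_fx M_x; rewrite !inE eqxx orbT => /(_ isT isT).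
move=> /setP /(_ (f (f x))); rewrite !inE eqxx orbT => /esym /orP[] /eqP // ffx.
by move: e_ffx; rewrite ffx irr.
Qed.

End PerfectMatching.

Section Acyclic.
Variables (T : finType) (e : rel T).
Hypotheses (irr : irreflexive e) (acy : acyclic_graph e).

Fixpoint no_backtrack (s : seq T) : bool :=
  if s is x :: (_ :: z :: _) as s' then (x != z) && no_backtrack s' else true.

Lemma acyclic_path_uniq x s : path e x s -> no_backtrack (x :: s) -> uniq (x :: s).
Proof.
elim: s x => [//|y s IH] x path_xs nb.
have uniq_s : uniq (y :: s).
  apply: IH; first by case/andP: path_xs.
  by case: s {path_xs} nb => [|z s] //= /andP[].
rewrite cons_uniq uniq_s andbT; apply/negP => x_s.
move: path_xs nb uniq_s; case/splitPr: x_s => p q.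
rewrite cat_path cat_uniq /= => /andP [path_xp /andP [e_px _]] nb.
case/and3P => uniq_p /norP [x_notin_p _] _.
have cycle_xp : cycle e (x :: p) by rewrite /= rcons_path path_xp.
case: p => [|z [|z' p]] in path_xp e_px nb x_notin_p uniq_p cycle_xp *.
- by rewrite /= irr in e_px.
- by rewrite /= eqxx in nb.
- have uniq_xp : uniq (x :: z :: z' :: p) by rewrite cons_uniq x_notin_p.
  by move: (acy uniq_xp isT); rewrite cycle_xp.
Qed.

Lemma acyclic_edge_injection_involutive f :
  (forall x, e x (f x)) -> injective f -> involutive f.
Proof.
move=> e_f f_inj x; have cycle_f := cycle_orbit f_inj x.
have cycle_e : cycle e (orbit f x) by apply: sub_cycle cycle_f => u v /eqP <-.
have : ~~ (2 < size (orbit f x)).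
  by apply/negP => /(acy (orbit_uniq f x)); rewrite cycle_e.
move: cycle_f (order_gt0 f x); rewrite /orbit size_traject.
case: (order f x) => [|[|[|n]]] //=.
  by case/andP=> /eqP fx _; move: (e_f x); rewrite fx irr.
by case/and3P=> _ /eqP.
Qed.

End Acyclic.

Section TopologicalOrder.
Variables (T : finType) (R : rel T).
Hypothesis R_acyclic : forall x p, ~~ path R x (rcons p x).

Lemma topological_enum : exists s : seq T,
  [/\ size s = #|T|, uniq s, forall x, x \in s
    & forall x y, R x y -> index x s < index y s].
Proof.
pose rank v := #|[set u | connect R u v]|.
have rank_lt x y : R x y -> rank x < rank y.
  move=> Rxy; apply/proper_card/properP; split.
    by apply/subsetP => u; rewrite !inE => /connect_trans; apply; apply: connect1.
  exists y; rewrite !inE ?connect0 //; apply/negP => /connectP [p path_yp x_last].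
  by move: (R_acyclic x (belast y p)); rewrite {2}x_last -lastI /= Rxy path_yp.
pose le_rank := relpre rank leq.
have le_rank_trans : transitive le_rank by move=> ? ? ?; apply: leq_trans.
pose s := sort le_rank (enum T).
have mem_s x : x \in s by rewrite mem_sort mem_enum.
have sorted_s : sorted le_rank s by apply: sort_sorted => u v; apply: leq_total.
exists s; split=> //; first by rewrite size_sort cardT.
  by rewrite sort_uniq enum_uniq.
move=> x y Rxy; rewrite ltnNge; apply/negP => le_yx.
have := sorted_leq_nth le_rank_trans (fun=> leqnn _) x sorted_s.
move=> /(_ (index y s) (index x s)); rewrite !inE !index_mem !mem_s !nth_index //.
by move=> /(_ isT isT le_yx); rewrite /= leqNgt rank_lt.
Qed.

End TopologicalOrder.

Section MatchedTree.
Variables (T : finType) (e : rel T) (mate : T -> T).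
Hypotheses (sym : symmetric e) (irr : irreflexive e) (acy : acyclic_graph e).
Hypotheses (e_mate : forall x, e x (mate x)) (mateK : involutive mate).

Definition alternating_rel : rel T := [rel x y | (x != y) && e y (mate x)].

Lemma alternating_walk x q : path alternating_rel x q ->
  path e x (mate x :: flatten [seq [:: y; mate y] | y <- q]) &&
  no_backtrack [:: x, mate x & flatten [seq [:: y; mate y] | y <- q]].
Proof.
elim: q x => [|y q IH] x /=; first by rewrite e_mate.
case/andP=> /andP [x_ne_y e_y_mx] /IH /andP [path_y nb_y].
move: path_y nb_y => /= /andP [_ ->] ->.
by rewrite !e_mate (sym (mate x)) e_y_mx (can_eq mateK) x_ne_y.
Qed.

Lemma alternating_rel_acyclic x p : ~~ path alternating_rel x (rcons p x).
Proof.
apply/negP => /alternating_walk /andP [path_w nb_w].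
have := acyclic_path_uniq irr acy path_w nb_w.
rewrite cons_uniq in_cons negb_or => /andP [/andP [_ x_notin_w] _].
case/negP: x_notin_w; apply/flatten_mapP.
by exists x; rewrite ?mem_rcons mem_head.
Qed.

Lemma involution_total_dominating_enum :
  exists s, size s = #|T| /\ total_dominating_seq e s.
Proof.
have [s [size_s uniq_s mem_s R_index]] := topological_enum alternating_rel_acyclic.
exists s; split=> //; rewrite /total_dominating_seq /legal_seq uniq_s /=.
apply/andP; split; last first.
  by apply/forallP => x; apply/existsP; exists (mate x); rewrite mem_s sym e_mate.
apply/forallP => i; apply/implyP => _; set v := tnth _ i.
have index_v : index v s = i by rewrite /v (tnth_nth v) index_uniq.
apply/set0Pn; exists (mate v); rewrite !inE in_nbhd_union e_mate andbT.
apply/hasPn => w /index_ltn index_w; apply/negP => e_w_mv.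
have v_ne_w : v != w by apply: contraTneq index_w => <-; rewrite index_v ltnn.
have := R_index v w; rewrite /alternating_rel /= v_ne_w e_w_mv index_v => /(_ isT).
by rewrite ltnNge ltnW.
Qed.

End MatchedTree.

Theorem mainTheorem8 (T : finType) (e : rel T) :
  symmetric e -> irreflexive e -> is_tree e -> 2 <= #|T| ->
  (gamma_gr_t e = #|T| <-> has_perfect_matching e).
Proof.
move=> sym irr [conn acy] T_ge2; have T_gt0 := ltnW T_ge2.
split=> [/(gamma_gr_t_cardP _ T_gt0) [s [size_s /andP [legal_s _]]] | ].
  apply/(perfect_matchingP sym irr).
  have no_isolated := connected_no_isolated conn T_ge2.
  have [f [e_f f_inj]] := legal_enum_footprint no_isolated legal_s size_s.
  by exists f; split; last exact: acyclic_edge_injection_involutive.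
case/(perfect_matchingP sym irr) => f [e_f fK].
by apply/(gamma_gr_t_cardP _ T_gt0); apply: involution_total_dominating_enum.
Qed.
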